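(* Assume $(\mu,\vec w_1,\vec w_2)$ is a perfect combination and let $g=S^{-1}\bar S$ be the Gauss–Borel factorization of its moment matrix. Define, for $l\ge0$, $A^{(l)}_a(x)=\sum_{i\le l,\ a_1(i)=a}S_{l,i}x^{k_1(i)}$ ($a=1,\dots,p_1$) and $\bar A^{(l)}_b(x)=\sum_{j\le l,\ a_2(j)=b}x^{k_2(j)}\bar S'_{j,l}$ ($b=1,\dots,p_2$), where $\bar S'=\bar S^{-1}$. Then: (i) $(A^{(l)}_1,\dots,A^{(l)}_{p_1})$ is the unique tuple of polynomials with $\deg A^{(l)}_a\le\nu_{1,a}(l)-1$, with $A^{(l)}_{a_1(l)}$ monic of degree $\nu_{1,a_1(l)}(l)-1$, and $$\int\Big(\sum_{a=1}^{p_1}A^{(l)}_a(x)w_{1,a}(x)\Big)w_{2,b}(x)x^k\,d\mu(x)=0,\qquad 0\le k\le\nu_{2,b}(l-1)-1,\ b=1,\dots,p_2;$$ i.e. it is the mixed multiple orthogonal polynomial system with degree vectors $[\vec\nu_1(l);\vec\nu_2(l-1)]$ and type II normalization in the component $a_1(l)$. (ii) $(\bar A^{(l)}_1,\dots,\bar A^{(l)}_{p_2})$ is the unique tuple of polynomials with $\deg\bar A^{(l)}_b\le\nu_{2,b}(l)-1$ such that $$\int\Big(\sum_{b=1}^{p_2}\bar A^{(l)}_b(x)w_{2,b}(x)\Big)w_{1,a}(x)x^k\,d\mu(x)=0,\qquad 0\le k\le\nu_{1,a}(l-1)-1,\ a=1,\dots,p_1,$$ and $\int\big(\sum_{b}\bar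 A^{(l)}_b(x)w_{2,b}(x)\big)w_{1,a_1(l)}(x)x^{\nu_{1,a_1(l)}(l-1)}d\mu(x)=1$; i.e. it is the mixed multiple orthogonal system with degree vectors $[\vec\nu_2(l);\vec\nu_1(l-1)]$ and type I normalization with respect to $a_1(l)$.
   Context: Let $\mu$ be a finite Borel measure on an interval $\Delta\subset\mathbb R$ with infinitely many points in its support, not changing sign, and $w_{1,a}$ ($a=1,\dots,p_1$), $w_{2,b}$ ($b=1,\dots,p_2$) real integrable functions on $\Delta$ not changing sign (all integrals finite). Compositions $\vec n_\ell=(n_{\ell,1},\dots,n_{\ell,p_\ell})\in\mathbb N^{p_\ell}$, $\ell=1,2$, are fixed. Each $i\in\mathbb Z_+$ is uniquely $i=q|\vec n_\ell|+n_{\ell,1}+\dots+n_{\ell,a-1}+r$, $0\le r<n_{\ell,a}$; put $a_\ell(i)=a$, $k_\ell(i)=qn_{\ell,a}+r$. The moment matrix is $g=(g_{i,j})_{i,j\ge0}$, $g_{i,j}=\int x^{k_1(i)+k_2(j)}w_{1,a_1(i)}(x)w_{2,a_2(j)}(x)\,d\mu(x)$. Degree vectors: $\nu_{\ell,a}(i)=\#\{0\le j\le i:a_\ell(j)=a\}$ (so $|\vec\nu_\ell(i)|=i+1$), $\vec\nu_\ell(-1)=0$. The combination $(\mu,\vec w_1,\vec w_2)$ is perfect if for all $\vec\nu_1\in\mathbb Z_+^{p_1}$, $\vec\nu_2\in\mathbb Z_+^{p_2}$ with $|\vec\nu_1|=|\vec\nu_2|+1$, any polynomials $A_1,\dots,A_{p_1}$,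 not all zero, with $\deg A_a\le\nu_{1,a}-1$ and $\int\sum_aA_aw_{1,a}w_{2,b}x^jd\mu=0$ for $j=0,\dots,\nu_{2,b}-1$, $b=1,\dots,p_2$, satisfy $\deg A_a=\nu_{1,a}-1$ for all $a$. For a perfect combination all $\det g^{[l]}\neq0$, $g^{[l]}=(g_{i,j})_{0\le i,j<l}$, and the Gauss–Borel factorization $g=S^{-1}\bar S$ exists uniquely, with $S$ lower triangular with unit diagonal and $\bar S$ upper triangular with nonzero diagonal (semi-infinite matrices). *)

From HB Require Import structures.
From mathcomp Require Import all_boot all_order all_algebra.
From mathcomp Require Import all_classical all_reals all_analysis.
Set Implicit Arguments. Unset Strict Implicit. Unset Printing Implicit Defensive.
Import Order.TTheory GRing.Theory Num.Theory.
Import numFieldNormedType.Exports.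
Local Open Scope classical_set_scope.
Local Open Scope ring_scope.

(* Indices a = 1..p of the paper are represented 0-based: a = 0..p-1 (nat).
   A composition is n : nat -> nat, used on 0..p-1 only. *)

Definition cum (n : nat -> nat) (a : nat) : nat := (\sum_(b < a) n b)%N.

(* a(i): i = q |n| + n_0 + ... + n_{a-1} + r, 0 <= r < n_a *)
Definition aidx (p : nat) (n : nat -> nat) (i : nat) : nat :=
  find (fun a => (i %% cum n p < cum n a.+1)%N) (iota 0 p).

Definition kidx (p : nat) (n : nat -> nat) (i : nat) : nat :=
  ((i %/ cum n p) * n (aidx p n i) + (i %% cum n p - cum n (aidx p n i)))%N.

(* nucount p n a m = #{0 <= j < m : a(j) = a}; hence
   nu_a(i) = nucount p n a i.+1   and   nu_a(i-1) = nucount p n a i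
   (in particular nu_a(-1) = nucount p n a 0 = 0). *)
Definition nucount (p : nat) (n : nat -> nat) (a m : nat) : nat :=
  count (fun j => aidx p n j == a) (iota 0 m).

(* Integration against a measure that does not change sign: the measure is
   eps * mu with mu a (nonnegative) finite measure and eps = 1 or eps = -1. *)
Definition mint (R : realType) (eps : R) (mu : {measure set R -> \bar R})
  (D : set R) (f : R -> R) : R := eps * Rintegral mu D f.

Definition msupport (R : realType) (mu : {measure set R -> \bar R}) (D : set R)
  : set R :=
  [set x | forall e : R, 0 < e -> (0 < mu (D `&` ball x e))%E].

Definition moment (R : realType) (eps : R) (mu : {measure set R -> \bar R})
  (D : set R) (p1 : nat) (n1 : nat -> nat) (w1 : nat -> R -> R)
  (p2 : nat) (n2 : nat -> nat) (w2 : nat -> R -> R) (i j : nat) : R :=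
  mint eps mu D (fun x => x ^+ (kidx p1 n1 i + kidx p2 n2 j)
                          * w1 (aidx p1 n1 i) x * w2 (aidx p2 n2 j) x).

Definition perfect (R : realType) (eps : R) (mu : {measure set R -> \bar R})
  (D : set R) (p1 : nat) (w1 : nat -> R -> R) (p2 : nat) (w2 : nat -> R -> R)
  : Prop :=
  forall (nu1 nu2 : nat -> nat),
    (\sum_(a < p1) nu1 a)%N = (\sum_(b < p2) nu2 b).+1 ->
  forall A : nat -> {poly R},
    (exists a, (a < p1)%N /\ A a != 0) ->
    (forall a, (a < p1)%N -> (size (A a) <= nu1 a)%N) ->
    (forall b j, (b < p2)%N -> (j < nu2 b)%N ->
       mint eps mu D (fun x => (\sum_(a < p1) (A a).[x] * w1 a x)
                                * w2 b x * x ^+ j) = 0) ->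
    forall a, (a < p1)%N -> size (A a) = nu1 a.

Definition lower_unitri (R : realType) (S : nat -> nat -> R) : Prop :=
  (forall i j, (i < j)%N -> S i j = 0) /\ (forall i, S i i = 1).
Definition upper_tri (R : realType) (S : nat -> nat -> R) : Prop :=
  forall i j, (j < i)%N -> S i j = 0.

Definition Apoly (R : realType) (p1 : nat) (n1 : nat -> nat)
  (S : nat -> nat -> R) (l a : nat) : {poly R} :=
  \sum_(i < l.+1 | aidx p1 n1 i == a) S l i *: 'X^(kidx p1 n1 i).
Definition Abarpoly (R : realType) (p2 : nat) (n2 : nat -> nat)
  (Sbar' : nat -> nat -> R) (l b : nat) : {poly R} :=
  \sum_(j < l.+1 | aidx p2 n2 j == b) Sbar' j l *: 'X^(kidx p2 n2 j).

From HB Require Import structures.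
From mathcomp Require Import all_boot all_order all_algebra.
From mathcomp Require Import all_classical all_reals all_analysis.
From mathcomp Require Import zify ring.
Import Order.TTheory GRing.Theory Num.Theory.
Import numFieldNormedType.Exports.

(* Index the rows of the moment matrix g by the monomials x^{k_1(i)} w_{1,a_1(i)} and its
   columns by x^{k_2(j)} w_{2,a_2(j)}.  The map i |-> (a(i), k(i)) is a bijection from
   {0..m-1} onto the pairs (a, k) with k < nu_a(m-1), so a tuple (P_a) of polynomials with
   deg P_a < nu_a(m-1) is the same thing as a coefficient vector of length m, and its mixed
   integrals are the products of that vector with g.  Row l of S g = Sbar vanishes in the
   columns j < l because Sbar is upper triangular: this is the type II orthogonality of
   A^(l).  Since S g Sbar' = 1 with S lower unitriangular, column l of g Sbar' is the unit
   vector e_l in the rows i <= l: this is the type I orthogonality and normalization of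
   Abar^(l).  Uniqueness holds because every leading block of g is invertible, being
   S^{-1} Sbar on that block. *)

Definition flat_coef {R : nzRingType} p n (P : nat -> {poly R}) i : R :=
  (P (aidx p n i))`_(kidx p n i).

Definition flat_poly {R : nzRingType} p n (c : nat -> R) m a : {poly R} :=
  (\sum_(i < m | aidx p n i == a) c i *: 'X^(kidx p n i))%R.

Section FlatIndex.
Context {p : nat} {n : nat -> nat}.

Lemma cumS a : cum n a.+1 = (cum n a + n a).
Proof. by rewrite /cum big_ord_recr. Qed.

Lemma leq_cum a b : (a <= b) -> (cum n a <= cum n b).
Proof.
elim: b => [|b IH]; first by rewrite leqn0 => /eqP->.
rewrite leq_eqVlt => /orP[/eqP->//|]; rewrite ltnS => /IH; rewrite cumS; lia.
Qed.

Lemma nucountS a m :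
  nucount p n a m.+1 = (nucount p n a m + (aidx p n m == a)).
Proof. by rewrite /nucount -addn1 iotaD count_cat /= addn0. Qed.

Lemma leq_nucount a m m' :
  (m <= m') -> (nucount p n a m <= nucount p n a m').
Proof.
elim: m' => [|m' IH]; first by rewrite leqn0 => /eqP->.
rewrite leq_eqVlt => /orP[/eqP->//|]; rewrite ltnS => /IH; rewrite nucountS; lia.
Qed.

Hypotheses (p_gt0 : (0 < p)) (n_gt0 : forall a, (a < p) -> (0 < n a)).

Lemma cum_gt0 : (0 < cum n p).
Proof. by case: p p_gt0 n_gt0 => // q _ nq; rewrite cumS; have := nq q (ltnSn q); lia. Qed.

Lemma aidx_bounds i :
  [/\ (aidx p n i < p), (cum n (aidx p n i) <= i %% cum n p)
    & (i %% cum n p < cum n (aidx p n i).+1)].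
Proof.
set r := (i %% cum n p).
have has_block : has (fun a => (r < cum n a.+1)) (iota 0 p).
  apply/hasP; exists p.-1; first by rewrite mem_iota; lia.
  by rewrite prednK // /r ltn_pmod // cum_gt0.
have ap : (aidx p n i < p).
  by rewrite /aidx; move: has_block; rewrite has_find size_iota.
split=> //; last by have := nth_find 0 has_block; rewrite nth_iota.
case Ea: (aidx p n i) => [|a]; first by rewrite /cum big_ord0.
have /(before_find 0) : (a < aidx p n i) by rewrite Ea.
by rewrite nth_iota ?add0n; lia.
Qed.

Lemma aidx_lt i : (aidx p n i < p).
Proof. by case: (aidx_bounds i). Qed.

Lemma eq_aidx i a : (a < p) ->
  (aidx p n i == a) = (cum n a <= i %% cum n p < cum n a.+1).
Proof.
move=> ap; have [ip lo hi] := aidx_bounds i.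
apply/eqP/andP => [<- //|[lo' hi']].
by case: (ltngtP (aidx p n i) a) => // /leq_cum; lia.
Qed.

Lemma nucountE a i : (a < p) ->
  nucount p n a i = (i %/ cum n p * n a + minn (i %% cum n p - cum n a) (n a)).
Proof.
move=> ap; have N_gt0 := cum_gt0.
have cap : (cum n a.+1 <= cum n p) by apply: leq_cum.
have := cumS a; set N := cum n p.
elim: i => [|i IH] E; first by rewrite /nucount /= div0n mod0n; lia.
rewrite nucountS IH // (eq_aidx i _ ap) -/N E.
have ei := divn_eq i N; have lr := ltn_pmod i N_gt0.
set q := (i %/ N) in ei *; set r := (i %% N) in ei lr *.
have [rN|rN] := ltnP r.+1 N.
- have -> : (i.+1 %/ N = q) by rewrite ei -addnS divnMDl // divn_small // addn0.
  have -> : (i.+1 %% N = r.+1) by rewrite ei -addnS modnMDl modn_small.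
  case: (leqP (cum n a) r) => H1; case: (ltnP r (cum n a + n a)) => H2 /=; lia.
- have rN' : r.+1 = N by lia.
  have -> : (i.+1 %/ N = q.+1) by rewrite ei -addnS rN' -mulSnr mulnK.
  have -> : (i.+1 %% N = 0) by rewrite ei -addnS rN' -mulSnr modnMl.
  have := n_gt0 _ ap.
  case: (leqP (cum n a) r) => H1; case: (ltnP r (cum n a + n a)) => H2 /=; lia.
Qed.

Lemma kidx_nucount i : kidx p n i = nucount p n (aidx p n i) i.
Proof.
have [ip lo hi] := aidx_bounds i.
by rewrite nucountE // /kidx; move: hi; rewrite cumS; lia.
Qed.

Lemma kidx_lt_nucount i m :
  (i < m) -> (kidx p n i < nucount p n (aidx p n i) m).
Proof.
move=> im; rewrite kidx_nucount.
by have := leq_nucount (aidx p n i) _ _ im; rewrite nucountS eqxx; lia.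
Qed.

Lemma flat_index_inj i j :
  aidx p n i = aidx p n j -> kidx p n i = kidx p n j -> i = j.
Proof.
move=> ea; rewrite !kidx_nucount ea => E.
case: (ltngtP i j) => // ij; have := leq_nucount (aidx p n j) _ _ ij;
  rewrite nucountS ?ea eqxx; lia.
Qed.

Lemma flat_index_surj a k m : (k < nucount p n a m) ->
  exists2 i, (i < m) & aidx p n i = a /\ kidx p n i = k.
Proof.
elim: m => [|m IH]; first by rewrite /nucount.
rewrite nucountS => hk; case: (ltnP k (nucount p n a m)) => [/IH[i im ei]|km].
  by exists i => //; apply: ltnW.
have am : aidx p n m = a by apply/eqP; move: hk; case: eqP => //= _; lia.
by exists m => //; split=> //; rewrite kidx_nucount am; move: hk; rewrite am eqxx; lia.
Qed.

Lemma big_nucount_flat (V : nmodType) (F : nat -> nat -> V) m :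
  (\sum_(a < p) \sum_(k < nucount p n a m) F a k =
   \sum_(i < m) F (aidx p n i) (kidx p n i))%R.
Proof.
elim: m => [|m IH].
  by rewrite big_ord0 big1 // => a _; rewrite /nucount big_ord0.
rewrite big_ord_recr /= -IH.
have -> : (\sum_(a < p) \sum_(k < nucount p n a m.+1) F a k =
    \sum_(a < p) (\sum_(k < nucount p n a m) F a k
                 + if aidx p n m == a then F a (nucount p n a m) else 0))%R.
  apply: eq_bigr => a _; rewrite nucountS; case: eqP => _.
    by rewrite addn1 big_ord_recr.
  by rewrite addn0 addr0.
rewrite big_split /=; congr (_ + _)%R.
rewrite -big_mkcond (big_pred1 (Ordinal (aidx_lt m))) ?kidx_nucount //.
Qed.

Local Open Scope ring_scope.
Context {R : nzRingType}.

Lemma size_flat_poly (c : nat -> R) m a :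
  (size (flat_poly p n c m a) <= nucount p n a m)%N.
Proof.
apply: (big_ind (fun q : {poly R} => size q <= nucount p n a m)%N).
- by rewrite size_poly0.
- by move=> q q' hq hq'; apply: leq_trans (size_polyD _ _) _; rewrite geq_max hq hq'.
- move=> i /eqP <-; apply: leq_trans (size_scale_leq _ _) _.
  by rewrite size_polyXn kidx_lt_nucount.
Qed.

Lemma flat_coef_poly (c : nat -> R) m i :
  (i < m)%N -> flat_coef p n (flat_poly p n c m) i = c i.
Proof.
move=> im; rewrite /flat_coef /flat_poly coef_sum (bigD1 (Ordinal im)) //=.
rewrite coefZ coefXn eqxx mulr1 big1 ?addr0 // => j /andP[/eqP ea ne].
rewrite coefZ coefXn; case: eqP => [kj|]; last by rewrite mulr0.
by case/eqP: ne; apply: val_inj; apply: flat_index_inj.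
Qed.

Lemma flat_poly_monic (c : nat -> R) l : c l = 1 ->
  let P := flat_poly p n c l.+1 (aidx p n l) in
  P \is monic /\ size P = nucount p n (aidx p n l) l.+1.
Proof.
move=> cl P.
have -> : P = flat_poly p n c l (aidx p n l) + 'X^(kidx p n l).
  by rewrite /P /flat_poly big_mkcond big_ord_recr /= eqxx cl scale1r -big_mkcond.
have lt_size : (size (flat_poly p n c l (aidx p n l)) < size ('X^(kidx p n l) : {poly R}))%N.
  by rewrite size_polyXn kidx_nucount ltnS size_flat_poly.
split; first by rewrite monicE lead_coefDr // lead_coefXn.
by rewrite addrC size_polyDl // size_polyXn nucountS eqxx kidx_nucount addn1.
Qed.

Lemma eq_poly_flat_coef (P Q : nat -> {poly R}) m a :
  (size (P a) <= nucount p n a m)%N -> (size (Q a) <= nucount p n a m)%N ->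
  (forall i, (i < m)%N -> flat_coef p n P i = flat_coef p n Q i) -> P a = Q a.
Proof.
move=> szP szQ PQ; apply/polyP => k.
have [km|km] := ltnP k (nucount p n a m); last first.
  by rewrite !nth_default // (leq_trans _ km).
by have [i im [<- <-]] := flat_index_surj _ _ _ km; apply: PQ.
Qed.

Lemma horner_flat (P : nat -> {poly R}) m x (h : nat -> R) :
  (forall a, (a < p)%N -> (size (P a) <= nucount p n a m)%N) ->
  \sum_(a < p) (P a).[x] * h a =
  \sum_(i < m) flat_coef p n P i * (x ^+ kidx p n i * h (aidx p n i)).
Proof.
move=> szP; rewrite -(big_nucount_flat _ (fun a k => (P a)`_k * (x ^+ k * h a))).
apply: eq_bigr => a _; rewrite (horner_coef_wide x (szP a (ltn_ord a))) mulr_suml.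
by apply: eq_bigr => k _; rewrite mulrA.
Qed.

End FlatIndex.

Local Open Scope classical_set_scope.
Local Open Scope ring_scope.

Lemma Rintegral_sumZl d (T : measurableType d) (R : realType)
    (mu : {measure set T -> \bar R}) (D : set T) (I : Type) (r : seq I)
    (c : I -> R) (f : I -> T -> R) :
  measurable D -> (forall i, mu.-integrable D (EFin \o f i)) ->
  Rintegral mu D (fun x => \sum_(i <- r) c i * f i x) =
  \sum_(i <- r) c i * Rintegral mu D (f i).
Proof.
move=> mD intf.
have intZ i : mu.-integrable D (EFin \o (fun x => c i * f i x)).
  apply: (eq_integrable mD _ _ _ (integrableZl mD (c i) (intf i))) => x _.
  by rewrite /= EFinM.
elim: r => [|i r IH].
  by rewrite big_nil; under eq_Rintegral do rewrite big_nil; rewrite Rintegral_cst // mul0r.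
rewrite big_cons; under eq_Rintegral do rewrite big_cons.
rewrite RintegralD ?RintegralZl ?IH //.
apply: (eq_integrable mD _ _ _ (integrable_sum mD r (fun j _ => intZ j))).
by move=> x _; rewrite /= sumEFin.
Qed.

Lemma mint_sumZl (R : realType) (eps : R) (mu : {measure set R -> \bar R})
    (D : set R) (I : Type) (r : seq I) (c : I -> R) (f : I -> R -> R) :
  measurable D -> (forall i, mu.-integrable D (EFin \o f i)) ->
  mint eps mu D (fun x => \sum_(i <- r) c i * f i x) =
  \sum_(i <- r) c i * mint eps mu D (f i).
Proof.
move=> mD intf; rewrite /mint Rintegral_sumZl // mulr_sumr.
by apply: eq_bigr => i _; rewrite mulrCA.
Qed.

Section GaussBorel.
Context {R : realType} {S Sbar Sbar' g : nat -> nat -> R}.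
Hypotheses (S_lower : lower_unitri S) (Sbar_upper : upper_tri Sbar)
  (Sbar_diag : forall i, Sbar i i != 0)
  (S_g : forall i j, \sum_(k < i.+1) S i k * g k j = Sbar i j)
  (Sbar_Sbar' : forall i j, \sum_(k < j.+1) Sbar i k * Sbar' k j = (i == j)%:R).

Lemma moment_block_unitmx m : \matrix_(i < m, j < m) g i j \in unitmx.
Proof.
case: S_lower => S_up S_diag.
pose Sm := \matrix_(i < m, j < m) S i j; pose Bm := \matrix_(i < m, j < m) Sbar i j.
have SgB : Sm *m \matrix_(i < m, j < m) g i j = Bm.
  apply/matrixP => i j; rewrite !mxE -S_g.
  rewrite (big_ord_widen m (fun k => S i k * g k j) (ltn_ord i)) [RHS]big_mkcond /=.
  by apply: eq_bigr => k _; rewrite !mxE; case: ltnP => // ik; rewrite S_up ?mul0r.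
have detS : \det Sm = 1.
  rewrite det_trig; last by apply/is_trig_mxP => i j ij; rewrite mxE S_up.
  by rewrite big1 // => i _; rewrite mxE S_diag.
have : \det Bm != 0.
  rewrite -det_tr det_trig; last by apply/is_trig_mxP => i j ij; rewrite !mxE Sbar_upper.
  by rewrite prodf_seq_neq0; apply/allP => i _; rewrite !mxE Sbar_diag.
by rewrite -SgB det_mulmx detS mul1r unitmxE unitfE.
Qed.

Lemma moment_row_kernel m (c : nat -> R) :
  (forall j, (j < m)%N -> \sum_(i < m) c i * g i j = 0) ->
  forall i, (i < m)%N -> c i = 0.
Proof.
move=> cg0 i im; pose v := \row_(i < m) c i.
have : v *m \matrix_(i < m, j < m) g i j = 0.
  apply/rowP => j; rewrite !mxE -[RHS](cg0 j (ltn_ord j)).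
  by apply: eq_bigr => k _; rewrite !mxE.
move/(canRL (mulmxK (moment_block_unitmx m))); rewrite mul0mx.
by move/rowP/(_ (Ordinal im)); rewrite !mxE.
Qed.

Lemma moment_col_kernel m (c : nat -> R) :
  (forall i, (i < m)%N -> \sum_(j < m) g i j * c j = 0) ->
  forall j, (j < m)%N -> c j = 0.
Proof.
move=> gc0 j jm; pose v := \col_(j < m) c j.
have : \matrix_(i < m, j < m) g i j *m v = 0.
  apply/colP => i; rewrite !mxE -[RHS](gc0 i (ltn_ord i)).
  by apply: eq_bigr => k _; rewrite !mxE.
move/(canRL (mulKmx (moment_block_unitmx m))); rewrite mulmx0.
by move/colP/(_ (Ordinal jm)); rewrite !mxE.
Qed.

Lemma S_row_orthogonal l j : (j < l)%N -> \sum_(i < l.+1) S l i * g i j = 0.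
Proof. by move=> jl; rewrite S_g Sbar_upper. Qed.

Lemma Sbar'_col_biorthogonal l i :
  (i <= l)%N -> \sum_(j < l.+1) g i j * Sbar' j l = (i == l)%:R.
Proof.
case: S_lower => _ S_diag.
have S_gSbar' i' : \sum_(k < i'.+1) S i' k * (\sum_(j < l.+1) g k j * Sbar' j l)
                   = (i' == l)%:R.
  rewrite -Sbar_Sbar'; under eq_bigr do rewrite mulr_sumr.
  rewrite exchange_big /=; apply: eq_bigr => j _.
  by rewrite -S_g mulr_suml; apply: eq_bigr => k _; rewrite mulrA.
elim/ltn_ind: i => i IH il; move: (S_gSbar' i).
rewrite big_ord_recr /= S_diag mul1r big1 ?add0r // => k _.
have kl : (k < l)%N := leq_trans (ltn_ord k) il.
by rewrite IH ?(ltn_eqF kl) ?mulr0 // ltnW.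
Qed.

End GaussBorel.

Section MixedOrthogonality.
Context {R : realType} {D : set R} {eps : R} {mu : {measure set R -> \bar R}}.
Context {p1 p2 : nat} {n1 n2 : nat -> nat} {w1 w2 : nat -> R -> R}.
Hypotheses (mD : measurable D) (p1_gt0 : (0 < p1)%N) (p2_gt0 : (0 < p2)%N)
  (n1_gt0 : forall a, (a < p1)%N -> (0 < n1 a)%N)
  (n2_gt0 : forall b, (b < p2)%N -> (0 < n2 b)%N)
  (w_integrable : forall a b k, (a < p1)%N -> (b < p2)%N ->
     mu.-integrable D (fun x => (x ^+ k * w1 a x * w2 b x)%:E)).

Local Notation I := (mint eps mu D).
Local Notation g := (moment eps mu D p1 n1 w1 p2 n2 w2).

Definition typeII_orthogonal l (B : nat -> {poly R}) :=
  forall b k, (b < p2)%N -> (k < nucount p2 n2 b l)%N ->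
    I (fun x => (\sum_(a < p1) (B a).[x] * w1 a x) * w2 b x * x ^+ k) = 0.

Definition typeI_orthogonal l (B : nat -> {poly R}) :=
  forall a k, (a < p1)%N -> (k < nucount p1 n1 a l)%N ->
    I (fun x => (\sum_(b < p2) (B b).[x] * w2 b x) * w1 a x * x ^+ k) = 0.

Definition typeI_normalized l (B : nat -> {poly R}) :=
  I (fun x => (\sum_(b < p2) (B b).[x] * w2 b x) * w1 (aidx p1 n1 l) x
                * x ^+ nucount p1 n1 (aidx p1 n1 l) l) = 1.

Lemma mint_typeII_moment (P : nat -> {poly R}) m j :
  (forall a, (a < p1)%N -> (size (P a) <= nucount p1 n1 a m)%N) ->
  I (fun x => (\sum_(a < p1) (P a).[x] * w1 a x) * w2 (aidx p2 n2 j) x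
                * x ^+ kidx p2 n2 j) =
  \sum_(i < m) flat_coef p1 n1 P i * g i j.
Proof.
move=> szP; set b := aidx p2 n2 j; set k := kidx p2 n2 j.
have -> : (fun x => (\sum_(a < p1) (P a).[x] * w1 a x) * w2 b x * x ^+ k) =
    (fun x => \sum_(i < m) flat_coef p1 n1 P i *
                (x ^+ (kidx p1 n1 i + k) * w1 (aidx p1 n1 i) x * w2 b x)).
  apply: boolp.funext => x; rewrite -mulrA mulr_suml; under eq_bigr do rewrite -mulrA.
  rewrite (horner_flat p1_gt0 n1_gt0 _ _ x (fun a => w1 a x * (w2 b x * x ^+ k)) szP).
  by apply: eq_bigr => i _; rewrite exprD; ring.
rewrite mint_sumZl // => i.
exact: (w_integrable _ _ _ (aidx_lt p1_gt0 n1_gt0 i) (aidx_lt p2_gt0 n2_gt0 j)).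
Qed.

Lemma mint_typeI_moment (P : nat -> {poly R}) m i :
  (forall b, (b < p2)%N -> (size (P b) <= nucount p2 n2 b m)%N) ->
  I (fun x => (\sum_(b < p2) (P b).[x] * w2 b x) * w1 (aidx p1 n1 i) x
                * x ^+ kidx p1 n1 i) =
  \sum_(j < m) g i j * flat_coef p2 n2 P j.
Proof.
move=> szP; set a := aidx p1 n1 i; set k := kidx p1 n1 i.
have -> : (fun x => (\sum_(b < p2) (P b).[x] * w2 b x) * w1 a x * x ^+ k) =
    (fun x => \sum_(j < m) flat_coef p2 n2 P j *
                (x ^+ (k + kidx p2 n2 j) * w1 a x * w2 (aidx p2 n2 j) x)).
  apply: boolp.funext => x; rewrite -mulrA mulr_suml; under eq_bigr do rewrite -mulrA.
  rewrite (horner_flat p2_gt0 n2_gt0 _ _ x (fun b => w2 b x * (w1 a x * x ^+ k)) szP).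
  by apply: eq_bigr => j _; rewrite exprD; ring.
rewrite mint_sumZl // => [|j]; first by apply: eq_bigr => j _; rewrite mulrC.
exact: (w_integrable _ _ _ (aidx_lt p1_gt0 n1_gt0 i) (aidx_lt p2_gt0 n2_gt0 j)).
Qed.

Lemma typeII_moment_orthogonal l (B : nat -> {poly R}) :
  (forall a, (a < p1)%N -> (size (B a) <= nucount p1 n1 a l.+1)%N) ->
  typeII_orthogonal l B ->
  forall j, (j < l)%N -> \sum_(i < l.+1) flat_coef p1 n1 B i * g i j = 0.
Proof.
move=> szB orthB j jl; rewrite -mint_typeII_moment //.
by apply: orthB; [exact: aidx_lt | exact: kidx_lt_nucount].
Qed.

Lemma typeI_moment_biorthogonal l (B : nat -> {poly R}) :
  (forall b, (b < p2)%N -> (size (B b) <= nucount p2 n2 b l.+1)%N) ->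
  typeI_orthogonal l B -> typeI_normalized l B ->
  forall i, (i <= l)%N -> \sum_(j < l.+1) g i j * flat_coef p2 n2 B j = (i == l)%:R.
Proof.
move=> szB orthB normB i il; rewrite -mint_typeI_moment //.
have [lt_il|ge_il] := ltnP i l.
  by rewrite orthB ?(ltn_eqF lt_il) ?aidx_lt ?kidx_lt_nucount.
have -> : i = l by apply/eqP; rewrite eqn_leq il.
by rewrite eqxx kidx_nucount.
Qed.

Context {S Sbar Sbar' : nat -> nat -> R}.
Hypotheses (S_lower : lower_unitri S) (Sbar_upper : upper_tri Sbar)
  (Sbar_diag : forall i, Sbar i i != 0)
  (S_g : forall i j, \sum_(k < i.+1) S i k * g k j = Sbar i j)
  (Sbar_Sbar' : forall i j, \sum_(k < j.+1) Sbar i k * Sbar' k j = (i == j)%:R).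

Lemma Apoly_moment l j :
  (j < l)%N -> \sum_(i < l.+1) flat_coef p1 n1 (Apoly p1 n1 S l) i * g i j = 0.
Proof.
move=> jl; under eq_bigr => i _ do
  rewrite (flat_coef_poly p1_gt0 n1_gt0 _ _ _ (ltn_ord i)).
exact: (S_row_orthogonal Sbar_upper S_g _ _ jl).
Qed.

Lemma Abarpoly_moment l i : (i <= l)%N ->
  \sum_(j < l.+1) g i j * flat_coef p2 n2 (Abarpoly p2 n2 Sbar' l) j = (i == l)%:R.
Proof.
move=> il; under eq_bigr => j _ do
  rewrite (flat_coef_poly p2_gt0 n2_gt0 (fun j => Sbar' j l) _ _ (ltn_ord j)).
exact: (Sbar'_col_biorthogonal S_lower S_g Sbar_Sbar' _ _ il).
Qed.

Lemma Apoly_orthogonal l : typeII_orthogonal l (Apoly p1 n1 S l).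
Proof.
move=> b k bp kl; have [j jl [<- <-]] := flat_index_surj p2_gt0 n2_gt0 _ _ _ kl.
rewrite (mint_typeII_moment _ l.+1) ?Apoly_moment // => a _.
exact: size_flat_poly.
Qed.

Lemma Abarpoly_orthogonal l : typeI_orthogonal l (Abarpoly p2 n2 Sbar' l).
Proof.
move=> a k ap kl; have [i il [<- <-]] := flat_index_surj p1_gt0 n1_gt0 _ _ _ kl.
rewrite (mint_typeI_moment _ l.+1) ?Abarpoly_moment ?(ltn_eqF il) ?(ltnW il) // => b _.
exact: (size_flat_poly p2_gt0 n2_gt0 (fun j => Sbar' j l)).
Qed.

Lemma Abarpoly_normalized l : typeI_normalized l (Abarpoly p2 n2 Sbar' l).
Proof.
rewrite /typeI_normalized -(kidx_nucount p1_gt0 n1_gt0) (mint_typeI_moment _ l.+1).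
  by rewrite Abarpoly_moment ?eqxx.
by move=> b _; exact: (size_flat_poly p2_gt0 n2_gt0 (fun j => Sbar' j l)).
Qed.

Lemma Apoly_unique l (B : nat -> {poly R}) :
  (forall a, (a < p1)%N -> (size (B a) <= nucount p1 n1 a l.+1)%N) ->
  B (aidx p1 n1 l) \is monic ->
  size (B (aidx p1 n1 l)) = nucount p1 n1 (aidx p1 n1 l) l.+1 ->
  typeII_orthogonal l B ->
  forall a, (a < p1)%N -> B a = Apoly p1 n1 S l a.
Proof.
move=> szB monB szBl orthB a ap.
pose c i := flat_coef p1 n1 B i - flat_coef p1 n1 (Apoly p1 n1 S l) i.
have c_l : c l = 0.
  apply/eqP; rewrite subr_eq0 (flat_coef_poly p1_gt0 n1_gt0 _ _ _ (ltnSn l)); case: S_lower => _ ->.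
  move/monicP: monB; rewrite /flat_coef /lead_coef szBl.
  by rewrite nucountS eqxx addn1 -(kidx_nucount p1_gt0 n1_gt0) => ->.
have c_lt : forall i, (i < l)%N -> c i = 0.
  apply: (moment_row_kernel S_lower Sbar_upper Sbar_diag S_g) => j jl.
  have : \sum_(i < l.+1) c i * g i j = 0.
    under eq_bigr do rewrite mulrBl.
    by rewrite sumrB typeII_moment_orthogonal // Apoly_moment // subr0.
  by rewrite big_ord_recr /= c_l mul0r addr0.
apply: (eq_poly_flat_coef p1_gt0 n1_gt0 _ _ l.+1 a (szB a ap)); first exact: size_flat_poly.
move=> i; rewrite ltnS leq_eqVlt => /orP[/eqP->|il]; apply/eqP; rewrite -subr_eq0.
  by rewrite -/(c l) c_l.
by rewrite -/(c i) c_lt.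
Qed.

Lemma Abarpoly_unique l (B : nat -> {poly R}) :
  (forall b, (b < p2)%N -> (size (B b) <= nucount p2 n2 b l.+1)%N) ->
  typeI_orthogonal l B -> typeI_normalized l B ->
  forall b, (b < p2)%N -> B b = Abarpoly p2 n2 Sbar' l b.
Proof.
move=> szB orthB normB b bp.
pose c j := flat_coef p2 n2 B j - flat_coef p2 n2 (Abarpoly p2 n2 Sbar' l) j.
have c0 : forall j, (j < l.+1)%N -> c j = 0.
  apply: (moment_col_kernel S_lower Sbar_upper Sbar_diag S_g) => i il.
  under eq_bigr do rewrite mulrBr.
  by rewrite sumrB typeI_moment_biorthogonal // Abarpoly_moment // subrr.
apply: (eq_poly_flat_coef p2_gt0 n2_gt0 _ _ l.+1 b (szB b bp)).
  exact: (size_flat_poly p2_gt0 n2_gt0 (fun j => Sbar' j l)).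
by move=> j jl; apply/eqP; rewrite -subr_eq0 -/(c j) c0.
Qed.

End MixedOrthogonality.

Theorem proposition2p3 (R : realType) (D : set R) (eps : R)
  (mu : {finite_measure set R -> \bar R})
  (p1 p2 : nat) (n1 n2 : nat -> nat) (w1 w2 : nat -> R -> R)
  (S Sbar Sbar' : nat -> nat -> R) :
  is_interval D -> measurable D ->
  (eps = 1 \/ eps = -1) ->
  ~ finite_set (msupport mu D) ->
  (0 < p1)%N -> (0 < p2)%N ->
  (forall a, (a < p1)%N -> (0 < n1 a)%N) ->
  (forall b, (b < p2)%N -> (0 < n2 b)%N) ->
  (forall a, (a < p1)%N -> mu.-integrable D (fun x => (w1 a x)%:E)) ->
  (forall b, (b < p2)%N -> mu.-integrable D (fun x => (w2 b x)%:E)) ->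
  (forall a, (a < p1)%N ->
     (forall x, D x -> 0 <= w1 a x) \/ (forall x, D x -> w1 a x <= 0)) ->
  (forall b, (b < p2)%N ->
     (forall x, D x -> 0 <= w2 b x) \/ (forall x, D x -> w2 b x <= 0)) ->
  (forall a b k, (a < p1)%N -> (b < p2)%N ->
     mu.-integrable D (fun x => (x ^+ k * w1 a x * w2 b x)%:E)) ->
  perfect eps mu D p1 w1 p2 w2 ->
  (* Gauss--Borel factorization g = S^{-1} Sbar, written as S g = Sbar *)
  lower_unitri S ->
  upper_tri Sbar -> (forall i, Sbar i i != 0) ->
  (forall i j, \sum_(k < i.+1) S i k * moment eps mu D p1 n1 w1 p2 n2 w2 k j
               = Sbar i j) ->
  (* Sbar' = Sbar^{-1} *)
  upper_tri Sbar' ->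
  (forall i j, \sum_(k < j.+1) Sbar i k * Sbar' k j = (i == j)%:R) ->
  forall l : nat,
  let a1 := aidx p1 n1 in
  let nu1 a i := nucount p1 n1 a i.+1 in     (* nu_{1,a}(i) *)
  let nu1m a i := nucount p1 n1 a i in       (* nu_{1,a}(i-1) *)
  let nu2 b i := nucount p2 n2 b i.+1 in     (* nu_{2,b}(i) *)
  let nu2m b i := nucount p2 n2 b i in       (* nu_{2,b}(i-1) *)
  let I := mint eps mu D in
  let typeII (B : nat -> {poly R}) :=
    [/\ forall a, (a < p1)%N -> (size (B a) <= nu1 a l)%N,
        B (a1 l) \is monic /\ size (B (a1 l)) = nu1 (a1 l) l &
        forall b k, (b < p2)%N -> (k < nu2m b l)%N ->
          I (fun x => (\sum_(a < p1) (B a).[x] * w1 a x) * w2 b x * x ^+ k) = 0]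
  in
  let typeI (B : nat -> {poly R}) :=
    [/\ forall b, (b < p2)%N -> (size (B b) <= nu2 b l)%N,
        forall a k, (a < p1)%N -> (k < nu1m a l)%N ->
          I (fun x => (\sum_(b < p2) (B b).[x] * w2 b x) * w1 a x * x ^+ k) = 0 &
        I (fun x => (\sum_(b < p2) (B b).[x] * w2 b x) * w1 (a1 l) x
                      * x ^+ (nu1m (a1 l) l)) = 1]
  in
  (typeII (Apoly p1 n1 S l) /\
   forall B, typeII B -> forall a, (a < p1)%N -> B a = Apoly p1 n1 S l a) /\
  (typeI (Abarpoly p2 n2 Sbar' l) /\
   forall B, typeI B -> forall b, (b < p2)%N -> B b = Abarpoly p2 n2 Sbar' l b).
Proof.
move=> _ mD _ _ p1_gt0 p2_gt0 n1_gt0 n2_gt0 _ _ _ _ w_int _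
  S_lower Sbar_upper Sbar_diag S_g _ Sbar_Sbar' l /=.
have [_ S_diag] := S_lower.
split; split.
- split.
  + by move=> a _; exact: size_flat_poly.
  + exact: flat_poly_monic.
  + exact: (Apoly_orthogonal mD p1_gt0 p2_gt0 n1_gt0 n2_gt0 w_int Sbar_upper S_g).
- move=> B [szB [monB szBl] orthB].
  exact: (Apoly_unique mD p1_gt0 p2_gt0 n1_gt0 n2_gt0 w_int
            S_lower Sbar_upper Sbar_diag S_g _ _ szB monB szBl orthB).
- split.
  + by move=> b _; exact: (size_flat_poly p2_gt0 n2_gt0 (fun j => Sbar' j l)).
  + exact: (Abarpoly_orthogonal mD p1_gt0 p2_gt0 n1_gt0 n2_gt0 w_int
              S_lower S_g Sbar_Sbar').
  + exact: (Abarpoly_normalized mD p1_gt0 p2_gt0 n1_gt0 n2_gt0 w_int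
              S_lower S_g Sbar_Sbar').
- move=> B [szB orthB normB].
  exact: (Abarpoly_unique mD p1_gt0 p2_gt0 n1_gt0 n2_gt0 w_int
            S_lower Sbar_upper Sbar_diag S_g Sbar_Sbar' _ _ szB orthB normB).
Qed.
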